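(* Let $Z\subset\mathbb{R}^d$ be a zonotope and let $Z_1=\lambda_1Z+x_1$ and $Z_2=\lambda_2Z+x_2$ ($\lambda_1,\lambda_2>0$) be homothets of $Z$ with $Z_1\cap Z_2\neq\emptyset$ and $\lambda_1\ge\lambda_2$. Then $Z_1$ contains at least one vertex of $Z_2$.
   Context: A zonotope is a centrally symmetric convex polytope all of whose faces are centrally symmetric. *)

From HB Require Import structures.
From mathcomp Require Import all_boot all_order all_algebra.
From mathcomp Require Import reals.
Set Implicit Arguments. Unset Strict Implicit. Unset Printing Implicit Defensive.
Import Order.TTheory GRing.Theory Num.Theory.
Local Open Scope ring_scope.

Section Zonotopes.
Variables (R : realType) (d : nat).
Notation pt := 'rV[R]_d.

Definition dotp (u v : pt) : R := \sum_(i < d) u 0 i * v 0 i.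

Definition conv_hull (s : seq pt) : pt -> Prop := fun x =>
  exists w : 'I_(size s) -> R,
    [/\ forall i, 0 <= w i, \sum_i w i = 1 & x = \sum_i w i *: s`_i].

Definition polytope (P : pt -> Prop) : Prop :=
  exists s : seq pt, forall x, P x <-> conv_hull s x.

Definition face (P F : pt -> Prop) : Prop :=
  (forall x, F x <-> P x) \/
  exists (a : pt) (c : R), (forall x, P x -> dotp a x <= c) /\
    (forall x, F x <-> (P x /\ dotp a x = c)).

Definition vertex (P : pt -> Prop) (v : pt) : Prop :=
  face P (fun x => x = v).

Definition centrally_symmetric (S : pt -> Prop) : Prop :=
  exists c : pt, forall x, S x -> S (2%:R *: c - x).

(* zonotope: a (centrally symmetric) convex polytope all of whose faces are
   centrally symmetric (P itself is one of its faces) *)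
Definition zonotope (Z : pt -> Prop) : Prop :=
  polytope Z /\ forall F, face Z F -> centrally_symmetric F.

Definition homothet (lambda : R) (x : pt) (Z : pt -> Prop) : pt -> Prop :=
  fun y => exists2 z, Z z & y = lambda *: z + x.

End Zonotopes.

(* Every point y of a polytope Z all of whose faces are centrally symmetric is
   the midpoint of a vertex v of Z and of a point of Z.  Induct on the number of
   generators of a face F containing y: going from the centre c of F through y
   one leaves F at a point y' of a smaller face, and if y' is the midpoint of v
   and w then 2y - v is a convex combination of w and of 2c - v, both in F.
   Supporting hyperplanes come from Farkas' lemma (Fourier-Motzkin elimination).

   If Z1 = l1 Z + x1 and Z2 = l2 Z + x2 meet at l1 z1 + x1 = l2 z2 + x2, let
   sigma be the symmetry of Z.  The map z |-> sigma ((l2 z + x2 - x1) / l1) is a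
   homothety of ratio -l2/l1 in [-1, 0) sending z2 to sigma z1, so its centre y
   lies on the segment between them, in Z.  Writing y as the midpoint of a
   vertex v and of w in Z, the image of v lies on the segment [y, w], so the
   vertex l2 v + x2 of Z2 lies in Z1. *)

From HB Require Import structures.
From mathcomp Require Import all_boot all_order all_algebra.
From mathcomp Require Import boolp classical_sets reals.
From mathcomp Require Import ring lra.
Import Order.TTheory GRing.Theory Num.Theory.
Local Open Scope ring_scope.
Set Implicit Arguments. Unset Strict Implicit. Unset Printing Implicit Defensive.

Section DotProduct.
Variables (R : realType) (n : nat).
Implicit Types (u v w : 'rV[R]_n) (k : R).

Lemma dotpC u v : dotp u v = dotp v u.
Proof. by apply: eq_bigr => i _; rewrite mulrC. Qed.

Lemma dotpDr u v w : dotp u (v + w) = dotp u v + dotp u w.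
Proof. by rewrite /dotp -big_split; apply: eq_bigr => i _; rewrite mxE mulrDr. Qed.

Lemma dotpZr u v k : dotp u (k *: v) = k * dotp u v.
Proof. by rewrite /dotp mulr_sumr; apply: eq_bigr => i _; rewrite mxE mulrCA. Qed.

Lemma dotpNr u v : dotp u (- v) = - dotp u v.
Proof. by rewrite -scaleN1r dotpZr mulN1r. Qed.

Lemma dotpBr u v w : dotp u (v - w) = dotp u v - dotp u w.
Proof. by rewrite dotpDr dotpNr. Qed.

Lemma dotp0r u : dotp u 0 = 0.
Proof. by rewrite -(scale0r 0) dotpZr mul0r. Qed.

Lemma dotpDl u v w : dotp (v + w) u = dotp v u + dotp w u.
Proof. by rewrite !(dotpC _ u) dotpDr. Qed.

Lemma dotpZl u v k : dotp (k *: v) u = k * dotp v u.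
Proof. by rewrite !(dotpC _ u) dotpZr. Qed.

Lemma dotpNl u v : dotp (- v) u = - dotp v u.
Proof. by rewrite !(dotpC _ u) dotpNr. Qed.

Lemma dotpBl u v w : dotp (v - w) u = dotp v u - dotp w u.
Proof. by rewrite !(dotpC _ u) dotpBr. Qed.

Lemma dotp0l u : dotp 0 u = 0.
Proof. by rewrite dotpC dotp0r. Qed.

Lemma dotpp_gt0 u : u != 0 -> 0 < dotp u u.
Proof.
move=> u_neq0; have sq_ge0 i : 0 <= u 0 i * u 0 i by rewrite -expr2 sqr_ge0.
rewrite lt_def sumr_ge0 // andbT; apply: contra u_neq0.
rewrite psumr_eq0 // => /allP u0; apply/eqP/rowP => j; rewrite mxE; apply/eqP.
by have := u0 j (mem_index_enum j); rewrite mulf_eq0 orbb.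
Qed.

End DotProduct.

Section NonnegativeCombinations.
Variables (R : realType) (n : nat).
Implicit Types (l : seq 'rV[R]_n) (a b p q x y : 'rV[R]_n) (c e k : R).

Fixpoint nncomb l x k : Prop :=
  if l is a :: l' then exists2 t, 0 <= t & nncomb l' (x - t *: a) (k - t)
  else x = 0 /\ k = 0.

Lemma nncomb_weights l x k :
  (exists w : 'I_(size l) -> R,
    [/\ forall i, 0 <= w i, \sum_i w i = k & x = \sum_i w i *: l`_i])
  <-> nncomb l x k.
Proof.
elim: l x k => [|a l IH] x k /=.
  split=> [[w [_]]|[-> ->]]; first by rewrite !big_ord0 => <- ->.
  by exists (fun=> 0); split; rewrite // big_ord0.
split=> [[w [w_ge0 <- ->]]|[t t_ge0 /IH[w [w_ge0 w_sum w_x]]]].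
  exists (w ord0) => //; apply/IH; exists (fun i => w (lift ord0 i)).
  by split=> //; rewrite big_ord_recl addrC addKr.
exists (fun i => if unlift ord0 i is Some j then w j else t); split.
- by move=> i; case: (unlift ord0 i).
- rewrite big_ord_recl unlift_none; under eq_bigr do rewrite liftK.
  by rewrite w_sum subrKC.
- rewrite big_ord_recl unlift_none; under eq_bigr do rewrite liftK.
  by rewrite -w_x subrKC.
Qed.

Lemma nncomb_ge0 l x k : nncomb l x k -> 0 <= k.
Proof.
elim: l x k => [|a l IH] x k /=; first by case=> _ ->.
by case=> t t_ge0 /IH; rewrite subr_ge0; apply: le_trans.
Qed.

Lemma nncomb_dot_le l x k b e :
  {in l, forall q, dotp b q <= e} -> nncomb l x k -> dotp b x <= k * e.
Proof.
elim: l x k => [|a l IH] x k /= ble; first by case=> -> ->; rewrite dotp0r mul0r.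
have ble' : {in l, forall q, dotp b q <= e}.
  by move=> q ql; apply: ble; rewrite in_cons ql orbT.
case=> t t_ge0 /(IH _ _ ble'); rewrite dotpBr dotpZr.
have := ler_wpM2l t_ge0 (ble a (mem_head a l)); lra.
Qed.

Lemma nncomb_dot_ge l x k b e :
  {in l, forall q, e <= dotp b q} -> nncomb l x k -> k * e <= dotp b x.
Proof.
move=> bge /(@nncomb_dot_le _ _ _ (- b) (- e)); rewrite dotpNl mulrN lerN2; apply.
by move=> q /bge; rewrite dotpNl lerN2.
Qed.

Lemma nncomb_dot_eq l x k b e :
  {in l, forall q, dotp b q = e} -> nncomb l x k -> dotp b x = k * e.
Proof.
move=> beq xl; apply/eqP; rewrite eq_le.
by rewrite (nncomb_dot_le _ xl) ?(nncomb_dot_ge _ xl) // => q /beq ->.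
Qed.

Lemma nncomb0 l : nncomb l 0 0.
Proof. by elim: l => [|a l IH] //=; exists 0; rewrite ?scale0r ?subr0. Qed.

Lemma nncomb_mem l q : q \in l -> nncomb l q 1.
Proof.
elim: l => [|a l IH] //; rewrite in_cons => /predU1P[->|/IH ql] /=.
  by exists 1; rewrite // scale1r !subrr; exact: nncomb0.
by exists 0; rewrite ?scale0r ?subr0.
Qed.

Lemma nncomb_weight0 l x : nncomb l x 0 -> x = 0.
Proof.
elim: l x => [|a l IH] x /=; first by case.
case=> t t_ge0 xl; have := nncomb_ge0 xl; rewrite sub0r oppr_ge0 => t_le0.
have t0 : t = 0 by apply/eqP; rewrite eq_le t_le0 t_ge0.
by move: xl; rewrite t0 scale0r !subr0 => /IH.
Qed.

Lemma nncombD l x y k k' :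
  nncomb l x k -> nncomb l y k' -> nncomb l (x + y) (k + k').
Proof.
elim: l x y k k' => [|a l IH] x y k k' /=.
  by case=> -> -> [-> ->]; rewrite !addr0.
case=> t t_ge0 xl [t' t'_ge0 yl]; exists (t + t'); first exact: addr_ge0.
have -> : x + y - (t + t') *: a = x - t *: a + (y - t' *: a).
  by rewrite scalerDl opprD addrACA.
by rewrite opprD (addrACA k); apply: IH.
Qed.

Lemma nncombZ l x k t : 0 <= t -> nncomb l x k -> nncomb l (t *: x) (t * k).
Proof.
move=> t_ge0; elim: l x k => [|a l IH] x k /=.
  by case=> -> ->; rewrite scaler0 mulr0.
case=> t' t'_ge0 /IH xl; exists (t * t'); first exact: mulr_ge0.
by rewrite -scalerA -scalerBr -mulrBr.
Qed.

Lemma nncomb_convex l x y t :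
  0 <= t <= 1 -> nncomb l x 1 -> nncomb l y 1 -> nncomb l (t *: x + (1 - t) *: y) 1.
Proof.
case/andP=> t_ge0 t_le1 xl yl; rewrite -subr_ge0 in t_le1.
by have := nncombD (nncombZ t_ge0 xl) (nncombZ t_le1 yl); rewrite !mulr1 subrKC.
Qed.

Lemma nncomb_filter (P : pred 'rV[R]_n) l x k :
  nncomb (filter P l) x k -> nncomb l x k.
Proof.
elim: l x k => [|a l IH] x k //=; case: (P a) => /=.
  by case=> t t_ge0 /IH; exists t.
by move=> /IH xl; exists 0; rewrite ?scale0r ?subr0.
Qed.

Lemma nncomb_face l a c x k :
  {in l, forall q, dotp a q <= c} -> nncomb l x k -> dotp a x = k * c ->
  nncomb [seq q <- l | dotp a q == c] x k.
Proof.
elim: l x k => [|q l IH] x k //= ale [t t_ge0 xl] ax.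
have ale' : {in l, forall q, dotp a q <= c}.
  by move=> q' ql; apply: ale; rewrite in_cons ql orbT.
have := nncomb_dot_le ale' xl; rewrite dotpBr dotpZr => axl.
have [aq_c|aq_neq_c] /= := eqVneq (dotp a q) c.
  by exists t => //; apply: IH; rewrite // dotpBr dotpZr aq_c ax mulrBl.
have aq_lt_c : dotp a q < c by rewrite lt_neqAle aq_neq_c ale ?mem_head.
have t0 : t = 0 by apply/eqP; rewrite eq_le t_ge0 andbT; nra.
by apply: IH; move: xl; rewrite // t0 scale0r !subr0.
Qed.

Lemma nncomb_const l p x k : {in l, forall q, q = p} -> nncomb l x k -> x = k *: p.
Proof.
elim: l x k => [|q l IH] x k /= lp; first by case=> -> ->; rewrite scale0r.
have lp' : {in l, forall q', q' = p} by move=> q' ql; apply: lp; rewrite in_cons ql orbT.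
case=> t t_ge0 /(IH _ _ lp').
by rewrite (lp q (mem_head q l)) scalerBl => /addIr.
Qed.

Lemma nncomb_shift l y x k :
  nncomb [seq q - y | q <- l] x k -> nncomb l (x + k *: y) k.
Proof.
elim: l x k => [|q l IH] x k /=; first by case=> -> ->; rewrite scale0r addr0.
case=> t t_ge0 /IH xl; exists t => //.
suff -> : x + k *: y - t *: q = x - t *: (q - y) + (k - t) *: y by [].
by apply/rowP => j; rewrite !mxE; ring.
Qed.

End NonnegativeCombinations.

Section Farkas.
Variable R : realType.

Lemma nncomb_map_linear n m (f : 'rV[R]_n -> 'rV[R]_m) l y k : linear f ->
  nncomb (map f l) y k -> exists2 z, nncomb l z k & y = f z.
Proof.
move=> f_lin; have f0 : f 0 = 0.
  by have := f_lin (-1) 0 0; rewrite scaler0 addr0 scaleN1r addNr.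
elim: l y k => [|a l IH] y k /=; first by case=> -> ->; exists 0.
case=> t t_ge0 /IH[z zl yz]; exists (t *: a + z).
  by exists t; rewrite // addrAC subrr add0r.
by rewrite f_lin -yz subrKC.
Qed.

Lemma nncomb_lift n l (Y : 'rV[R]_(n + 1)) k :
  nncomb [seq row_mx q (1%:M : 'rV[R]_1) | q <- l] Y k ->
  exists2 z, nncomb l z k & Y = row_mx z k%:M.
Proof.
elim: l Y k => [|q l IH] Y k /=.
  by case=> -> ->; exists 0; rewrite // -scalemx1 scale0r row_mx0.
case=> t t_ge0 /IH[z zl Yz]; exists (z + t *: q); first by exists t; rewrite // addrK.
rewrite -(subrK (t *: row_mx q 1%:M) Y) Yz scale_row_mx scalemx1 add_row_mx.
by rewrite -raddfD subrK.
Qed.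

Lemma farkas n (l : seq 'rV[R]_n) x :
  (exists k, nncomb l x k) \/
  (exists b, {in l, forall q, dotp b q <= 0} /\ 0 < dotp b x).
Proof.
move Ns: (size l) => N; elim: N l x Ns => [|N IH] [|a l] x //= => [_|[sl]].
  have [->|x_neq0] := eqVneq x 0; first by left; exists 0.
  by right; exists x; split=> //; exact: dotpp_gt0.
have [[k xl]|[b [bl bx]]] := IH l x sl.
  by left; exists k; exists 0; rewrite ?scale0r ?subr0.
have [ba_le0|ba_gt0] := lerP (dotp b a) 0.
  by right; exists b; split=> // q /predU1P[->|/bl].
(* Fourier-Motzkin step: [phi] projects along [a] onto the hyperplane
   [dotp b _ = 0]. *)
pose phi q := dotp b a *: q - dotp b q *: a.
have phi_lin : linear phi.
  by move=> t u v; apply/rowP => j; rewrite /phi dotpDr dotpZr !mxE; ring.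
have [[k /(nncomb_map_linear phi_lin)[z zl phi_xz]]|[b' [b'l b'x]]] :=
  IH (map phi l) (phi x) (etrans (size_map _ _) sl).
  have bz_le0 : dotp b z <= 0 by rewrite -(mulr0 k) (nncomb_dot_le bl zl).
  pose tau := (dotp b x - dotp b z) / dotp b a.
  left; exists (k + tau); exists tau.
    by apply: divr_ge0; rewrite ?subr_ge0 ?(le_trans bz_le0) ?ltW.
  suff -> : x - tau *: a = z by rewrite addrK.
  apply: (scalerI (lt0r_neq0 ba_gt0)); rewrite /phi in phi_xz.
  rewrite scalerBr scalerA /tau [dotp b a * _]mulrC divfK ?lt0r_neq0 //.
  by rewrite scalerBl opprB addrCA phi_xz subrKC.
pose b'' := b' - (dotp b' a / dotp b a) *: b.
have b''E v : dotp b'' v * dotp b a = dotp b' (phi v).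
  by rewrite /b'' /phi dotpBl dotpZl dotpBr !dotpZr; field; rewrite lt0r_neq0.
right; exists b''; split; last by rewrite -(pmulr_lgt0 _ ba_gt0) b''E.
move=> q /predU1P[->|ql]; rewrite -(pmulr_lle0 _ ba_gt0) b''E.
  by rewrite /phi subrr dotp0r.
exact: b'l (map_f phi ql).
Qed.

Lemma dotp_row_mx n m (u1 v1 : 'rV[R]_n) (u2 v2 : 'rV[R]_m) :
  dotp (row_mx u1 u2) (row_mx v1 v2) = dotp u1 v1 + dotp u2 v2.
Proof.
rewrite /dotp big_split_ord /=.
by congr (_ + _); apply: eq_bigr => i _; rewrite ?row_mxEl ?row_mxEr.
Qed.

Lemma nncomb_separation n (l : seq 'rV[R]_n) y : ~ nncomb l y 1 ->
  exists b e, {in l, forall q, dotp b q <= e} /\ e < dotp b y.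
Proof.
move=> yNl; pose lift (q : 'rV[R]_n) : 'rV[R]_(n + 1) := row_mx q 1%:M.
have dotp_lift B q : dotp B (lift q) = dotp (lsubmx B) q + rsubmx B 0 0.
  by rewrite -{1}(hsubmxK B) dotp_row_mx /dotp big_ord1 !mxE mulr1.
have [[k /nncomb_lift[z zl Yz]]|[B [Bl By]]] := farkas (map lift l) (lift y).
  case: (eq_row_mx Yz) => yz /(congr1 (fun M : 'rV[R]_1 => M 0 0)).
  by rewrite !mxE eqxx !mulr1n => k1; case: yNl; rewrite yz k1.
exists (lsubmx B), (- rsubmx B 0 0); split; last by move: By; rewrite dotp_lift; lra.
by move=> q ql; have := Bl _ (map_f lift ql); rewrite dotp_lift; lra.
Qed.

End Farkas.

Section RayExit.
Variables (R : realType) (n : nat) (l : seq 'rV[R]_n).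
Implicit Types (b c u y : 'rV[R]_n).

Lemma exists_dotp_ub b : exists K, {in l, forall q, dotp b q <= K}.
Proof.
by exists (\big[Num.max/0]_(q <- l) dotp b q) => q ql; exact: le_bigmax_seq.
Qed.

Lemma nncomb_ray_sup c u : u != 0 -> nncomb l (c + u) 1 ->
  exists2 M, 1 <= M & nncomb l (c + M *: u) 1 /\
    forall t, 0 < t -> ~ nncomb l (c + (M + t) *: u) 1.
Proof.
move=> u_neq0 lcu; pose A := [set m : R | nncomb l (c + m *: u) 1]%classic.
have [K lK] := exists_dotp_ub u.
have A1 : A 1 by rewrite /A /= scale1r.
have supA : has_sup A.
  split; first by exists 1.
  exists ((K - dotp u c) / dotp u u) => m /(nncomb_dot_le lK).
  by rewrite mul1r dotpDr dotpZr ler_pdivlMr ?dotpp_gt0 //; lra.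
have A_le : forall m, A m -> m <= sup A := sup_upper_bound supA.
exists (sup A); first exact: A_le.
split=> [|t t_gt0 /A_le]; last lra.
apply: contrapT => /nncomb_separation[b [e [lb eb]]].
have A_bound m : A m -> dotp b c + m * dotp b u <= e.
  by move=> /(nncomb_dot_le lb); rewrite mul1r dotpDr dotpZr.
move: eb; rewrite dotpDr dotpZr => eb.
have [bu_le0|bu_gt0] := lerP (dotp b u) 0.
  by have := A_bound 1 A1; have := A_le 1 A1; nra.
pose m0 := sup A - (dotp b c + sup A * dotp b u - e) / dotp b u.
have [|m Am m0m] := @sup_gt _ A m0 (ex_intro _ 1 A1).
  by rewrite /m0 ltrBlDr ltrDl divr_gt0 // subr_gt0.
have m0E : m0 * dotp b u = e - dotp b c.
  by rewrite /m0 mulrBl divfK ?lt0r_neq0 //; ring.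
by have := A_bound m Am; nra.
Qed.

Lemma nncomb_support_ray y u : u != 0 ->
  (forall t, 0 < t -> ~ nncomb l (y + t *: u) 1) ->
  exists b, {in l, forall q, dotp b q <= dotp b y} /\ 0 < dotp b u.
Proof.
move=> u_neq0 yNl.
have [[W uW]|[b [lb bu]]] := farkas [seq q - y | q <- l] u; last first.
  exists b; split=> // q ql.
  by have := lb _ (map_f (fun q => q - y) ql); rewrite dotpBr subr_le0.
have W_gt0 : 0 < W.
  rewrite lt_def (nncomb_ge0 uW) andbT; apply: contra u_neq0 => /eqP W0.
  by rewrite W0 in uW; rewrite (nncomb_weight0 uW).
have Winv_gt0 : 0 < W^-1 by rewrite invr_gt0.
exfalso; apply: (yNl _ Winv_gt0).
have := nncombZ (ltW Winv_gt0) (nncomb_shift uW).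
by rewrite mulVf ?lt0r_neq0 // scalerDr scalerA mulVf ?lt0r_neq0 // scale1r addrC.
Qed.

Lemma nncomb_ray_exit c u : u != 0 -> nncomb l (c + u) 1 ->
  exists M b, [/\ 1 <= M, nncomb l (c + M *: u) 1,
    {in l, forall q, dotp b q <= dotp b (c + M *: u)} & 0 < dotp b u].
Proof.
move=> u_neq0 /(nncomb_ray_sup u_neq0)[M M_ge1 [lM lNbeyond]].
have [|b [lb bu]] := @nncomb_support_ray (c + M *: u) u u_neq0.
  by move=> t t_gt0; rewrite -addrA -scalerDl; exact: lNbeyond.
by exists M, b.
Qed.

End RayExit.

Lemma count_subpred_lt (T : eqType) (P Q : pred T) (s : seq T) :
  {in s, forall x, Q x -> P x} -> (exists2 x, x \in s & P x && ~~ Q x) ->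
  (count Q s < count P s)%N.
Proof.
move=> QP [x xs /andP[Px Qx]].
have -> : count Q s = count Q (filter P s).
  rewrite count_filter; apply: eq_in_count => y ys /=.
  by case Qy: (Q y); rewrite //= QP.
rewrite -[count P s]size_filter -(count_predC Q (filter P s)).
rewrite -[X in (X < _)%N]addn0 ltn_add2l -has_count.
by apply/hasP; exists x; rewrite ?mem_filter ?Px.
Qed.

Section Perturbation.
Variables (R : realType) (n : nat) (s : seq 'rV[R]_n).
Implicit Types (a b x : 'rV[R]_n) (c e : R).

Lemma perturb_face a c b e :
  {in s, forall q, dotp a q <= c} -> {in s, forall q, dotp a q = c -> dotp b q <= e} ->
  exists2 eps, 0 < eps & {in s, forall q,
    dotp (a + eps *: b) q <= c + eps * e /\
    (dotp (a + eps *: b) q = c + eps * e -> dotp a q = c /\ dotp b q = e)}.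
Proof.
(* [g q] is a step below which [q] stays strictly under the tilted hyperplane. *)
move=> sa sb; pose g q := (c - dotp a q) / (`|dotp b q - e| + 1).
have norm1_gt0 r : 0 < `|r| + 1 :> R by rewrite ltr_wpDl.
pose eps := \big[Num.min/1]_(q <- s | dotp a q < c) g q.
have eps_gt0 : 0 < eps by apply: lt_bigmin => // q aq; rewrite divr_gt0 ?subr_gt0.
exists eps => // q qs; rewrite dotpDl dotpZl.
have [aq_lt_c|aq_ge_c] := ltrP (dotp a q) c.
  have eps_le : eps <= g q by exact: ge_bigmin_seq.
  have : eps * (dotp b q - e) < c - dotp a q.
    apply: (le_lt_trans (ler_wpM2l (ltW eps_gt0) (ler_norm _))).
    apply: (le_lt_trans (ler_wpM2r (normr_ge0 _) eps_le)).
    by rewrite /g mulrAC ltr_pdivrMr // ltr_pM2l ?subr_gt0 // ltrDl.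
  by move=> lt; split=> [|eq]; [lra | exfalso; lra].
have aq : dotp a q = c by apply: le_anti; rewrite aq_ge_c sa.
have bq := sb q qs aq; rewrite aq; split=> [|/addrI/(mulfI (lt0r_neq0 eps_gt0)) //].
by rewrite lerD2l ler_pM2l.
Qed.

Lemma exists_subface a c b e :
  {in s, forall q, dotp a q <= c} -> {in s, forall q, dotp a q = c -> dotp b q <= e} ->
  (exists2 q, q \in s & dotp a q = c /\ dotp b q < e) ->
  exists a' c', [/\ {in s, forall q, dotp a' q <= c'},
    (count (fun q => dotp a' q == c') s < count (fun q => dotp a q == c) s)%N,
    {in s, forall q, dotp a' q = c' -> dotp a q = c} &
    forall x, dotp a x = c -> dotp b x = e -> dotp a' x = c'].
Proof.
move=> sa sb [q0 q0s [aq0 bq0]]; have [eps eps_gt0 sa'] := perturb_face sa sb.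
exists (a + eps *: b), (c + eps * e); split.
- by move=> q /(sa' q)[].
- apply: count_subpred_lt => [q qs /eqP /(sa' q qs).2[/eqP]//|].
  exists q0 => //; rewrite aq0 eqxx /=; apply/eqP => /(sa' q0 q0s).2[_ bq0e].
  by move: bq0; rewrite bq0e ltxx.
- by move=> q qs /(sa' q qs).2[].
- by move=> x ax bx; rewrite dotpDl dotpZl ax bx.
Qed.

End Perturbation.

Lemma vertex_mem (R : realType) (d : nat) (P : 'rV[R]_d -> Prop) v :
  vertex P v -> P v.
Proof.
case=> [vP|[a [c [_ vP]]]]; first exact: (vP v).1.
by case: ((vP v).1 erefl).
Qed.

Lemma nncomb_segment_exit (R : realType) n (S : seq 'rV[R]_n) c0 p :
  nncomb S c0 1 -> nncomb S p 1 -> ~~ all (eq_op^~ p) S ->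
  exists y b th, [/\ nncomb S y 1, {in S, forall q, dotp b q <= dotp b y},
    dotp b c0 < dotp b y, 0 <= th <= 1 & p = th *: y + (1 - th) *: c0].
Proof.
move=> Sc0 Sp /allPn[q Sq qNp].
have [u [m [u_neq0 Su pE m01]]] : exists u m,
    [/\ u != 0, nncomb S (c0 + u) 1, p = c0 + m *: u & 0 <= m <= 1].
  have [pc0|pNc0] := eqVneq p c0.
    exists (q - c0), 0; rewrite subr_eq0 -pc0 qNp scale0r addr0 addrC subrK lexx ler01.
    by split=> //; exact: nncomb_mem.
  by exists (p - c0), 1; rewrite subr_eq0 pNc0 scale1r addrC subrK lexx ler01.
have [M [b [M_ge1 Sy bS bu]]] := nncomb_ray_exit u_neq0 Su.
have M_gt0 : 0 < M by apply: lt_le_trans M_ge1.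
exists (c0 + M *: u), b, (m / M); split=> //.
- by rewrite dotpDr dotpZr ltrDl mulr_gt0.
- case/andP: m01 => m_ge0 m_le1; apply/andP; split.
    exact: divr_ge0 m_ge0 (ltW M_gt0).
  by rewrite ler_pdivrMr // mul1r (le_trans m_le1).
- by rewrite pE; apply/rowP => j; rewrite !mxE; field; rewrite lt0r_neq0.
Qed.

Lemma nncomb_center (R : realType) n (S : seq 'rV[R]_n) c0 p :
  nncomb S p 1 -> nncomb S (2%:R *: c0 - p) 1 -> nncomb S c0 1.
Proof.
move=> Sp Sp'; have half01 : 0 <= (2%:R^-1 : R) <= 1.
  by rewrite invr_ge0 ler0n /= invf_le1 ?ler1n.
have := nncomb_convex half01 Sp Sp'.
suff -> : 2%:R^-1 *: p + (1 - 2%:R^-1) *: (2%:R *: c0 - p) = c0 by [].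
by apply/rowP => j; rewrite !mxE; field.
Qed.

Section CentrallySymmetricFaces.
Variables (R : realType) (d : nat) (s : seq 'rV[R]_d) (Z : 'rV[R]_d -> Prop).
Hypothesis Z_hull : forall x, Z x <-> nncomb s x 1.
Hypothesis Z_faces_sym : forall F, face Z F -> centrally_symmetric F.

Lemma hull_convex x y t : 0 <= t <= 1 -> Z x -> Z y -> Z (t *: x + (1 - t) *: y).
Proof. by move=> t01 /Z_hull xs /Z_hull ys; apply/Z_hull/nncomb_convex. Qed.

Lemma face_nncomb a c : {in s, forall q, dotp a q <= c} ->
  forall x, Z x /\ dotp a x = c <-> nncomb [seq q <- s | dotp a q == c] x 1.
Proof.
move=> sa x; split=> [[/Z_hull xs ax]|xS].
  by apply: nncomb_face; rewrite ?mul1r.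
split; first exact/Z_hull/(nncomb_filter xS).
by rewrite -[c]mul1r; apply: nncomb_dot_eq xS => q; rewrite mem_filter => /andP[/eqP].
Qed.

Lemma exists_vertex_reflect_face N a c :
  {in s, forall q, dotp a q <= c} -> (count (fun q => dotp a q == c) s <= N)%N ->
  forall p, Z p -> dotp a p = c ->
  exists v, [/\ vertex Z v, dotp a v = c & Z (2%:R *: p - v)].
Proof.
elim: N a c => [|N IH] a c sa cnt p Zp ap; have F_S := face_nncomb sa.
  move: cnt; rewrite leqn0 -size_filter size_eq0 => /eqP S0.
  by have := (F_S p).1 (conj Zp ap); rewrite S0 => -[_ /eqP]; rewrite oner_eq0.
set S := [seq q <- s | dotp a q == c] in F_S.
have [c0 c0_sym] : centrally_symmetric (fun x => Z x /\ dotp a x = c).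
  apply: Z_faces_sym; right; exists a, c; split=> // x /Z_hull/(nncomb_dot_le sa).
  by rewrite mul1r.
have S_p : nncomb S p 1 by exact/F_S.
have S_c0 : nncomb S c0 1 by apply: (nncomb_center S_p); apply/F_S/c0_sym.
have [/allP S_p1|S_notp] := boolP (all (eq_op^~ p) S).
  exists p; split=> //; last by rewrite scaler_nat mulr2n addrK.
  right; exists a, c; split=> [x /Z_hull/(nncomb_dot_le sa)|x]; first by rewrite mul1r.
  split=> [->|/F_S xS] //.
  by rewrite (nncomb_const (p := p) _ xS) ?scale1r // => q /S_p1/eqP.
have [y [b [th [S_y bS bc0 th01 pE]]]] := nncomb_segment_exit S_c0 S_p S_notp.
have sb : {in s, forall q, dotp a q = c -> dotp b q <= dotp b y}.
  by move=> q qs aq; apply: bS; rewrite mem_filter aq eqxx.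
have [q1 S_q1] : exists2 q1, q1 \in S & ~~ (dotp b y <= dotp b q1).
  apply/allPn; apply: contraL bc0 => /allP ge_by.
  by rewrite -leNgt -[dotp b y]mul1r (nncomb_dot_ge _ S_c0).
move: S_q1; rewrite mem_filter -ltNge => /andP[/eqP aq1 q1s] bq1.
(* Tilting the face towards [b] gives a smaller face through [y], missing [q1]. *)
have [a' [c' [sa' cnt' a'a a'_face]]] :=
  exists_subface sa sb (ex_intro2 _ _ q1 q1s (conj aq1 bq1)).
have [Zy ay] := (F_S y).2 S_y.
have cntN : (count (fun q => dotp a' q == c') s <= N)%N.
  by rewrite -ltnS (leq_trans cnt').
have [v [v_vtx a'v Z_2y_v]] := IH a' c' sa' cntN y Zy (a'_face y ay erefl).
have Zv := vertex_mem v_vtx.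
have av : dotp a v = c.
  have := (face_nncomb sa' v).1 (conj Zv a'v); rewrite -[c]mul1r.
  by apply: nncomb_dot_eq => q; rewrite mem_filter => /andP[/eqP a'q qs]; exact: a'a.
have [Z_2c0_v _] := c0_sym v (conj Zv av).
exists v; split=> //.
have -> : 2%:R *: p - v = th *: (2%:R *: y - v) + (1 - th) *: (2%:R *: c0 - v).
  by rewrite pE; apply/rowP => j; rewrite !mxE; ring.
exact: hull_convex.
Qed.

Lemma exists_vertex_reflect y : Z y -> exists2 v, vertex Z v & Z (2%:R *: y - v).
Proof.
move=> Zy; have s0 : {in s, forall q, dotp 0 q <= 0} by move=> q _; rewrite dotp0l.
have [|v [vtx _ Zv]] := exists_vertex_reflect_face s0 (leqnn _) Zy; first exact: dotp0l.
by exists v.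
Qed.

End CentrallySymmetricFaces.

Section Homothets.
Variables (R : realType) (d : nat) (Z V : 'rV[R]_d -> Prop) (c0 : 'rV[R]_d).
Hypothesis convZ : forall x y t, 0 <= t <= 1 -> Z x -> Z y -> Z (t *: x + (1 - t) *: y).
Hypothesis symZ : forall x, Z x -> Z (2%:R *: c0 - x).
Hypothesis reflectZ : forall y, Z y -> exists2 v, V v & Z (2%:R *: y - v).

Lemma homothets_meet_image l1 l2 x1 x2 : 0 < l2 -> l2 <= l1 ->
  (exists p, homothet l1 x1 Z p /\ homothet l2 x2 Z p) ->
  exists2 v, V v & homothet l1 x1 Z (l2 *: v + x2).
Proof.
move=> l2_gt0 l21 [p [[z1 Zz1 pE1] [z2 Zz2 pE2]]].
have l1_gt0 : 0 < l1 by apply: lt_le_trans l21.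
have ratio01 (x y : R) : 0 < x -> 0 < y -> y <= x -> 0 <= y / x <= 1.
  move=> x_gt0 y_gt0 yx; apply/andP; split; first exact: divr_ge0 (ltW _) (ltW _).
  by rewrite ler_pdivrMr ?mul1r.
(* [y] is the centre of the homothety [z |-> 2c0 - (l2 z + x2 - x1) / l1] and
   [m] is the image of [v] under it. *)
pose y := (l2 / (l1 + l2)) *: z2 + (1 - l2 / (l1 + l2)) *: (2%:R *: c0 - z1).
have Zy : Z y.
  rewrite /y; apply: (convZ _ Zz2 (symZ Zz1)).
  by apply: ratio01; rewrite ?addr_gt0 ?lerDr ?ltW.
have [v Vv Zw] := reflectZ Zy.
pose m := (l2 / l1) *: (2%:R *: y - v) + (1 - l2 / l1) *: y.
have Zm : Z m by rewrite /m; apply: (convZ _ Zw Zy); exact: ratio01.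
exists v => //; exists (2%:R *: c0 - m); first exact: symZ.
have -> : x2 = l1 *: z1 + x1 - l2 *: z2 by rewrite -pE1 pE2 addrC addKr.
apply/rowP => j; rewrite !mxE; field.
by rewrite lt0r_neq0 ?addr_gt0 ?lt0r_neq0.
Qed.

End Homothets.

Lemma vertex_homothet (R : realType) d (Z : 'rV[R]_d -> Prop) l x u :
  0 < l -> vertex Z u -> vertex (homothet l x Z) (l *: u + x).
Proof.
move=> l_gt0 [Zu|[a [c [Za Zac]]]].
  by left => y; split=> [->|[z /Zu -> ->]]; first by exists u; first exact/Zu.
right; exists a, (l * c + dotp a x); split=> [y [z Zz ->]|y].
  by rewrite dotpDr dotpZr lerD2r ler_pM2l // Za.
split=> [->|[[z Zz ->]]].
  have [Zu au] := (Zac u).1 erefl.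
  by split; [exists u | rewrite dotpDr dotpZr au].
rewrite dotpDr dotpZr => /addIr /(mulfI (lt0r_neq0 l_gt0)) az.
by rewrite ((Zac z).2 (conj Zz az)).
Qed.

Unset Implicit Arguments.

Theorem mainTheorem19 (R : realType) (d : nat) (Z : 'rV[R]_d -> Prop)
  (l1 l2 : R) (x1 x2 : 'rV[R]_d) :
  zonotope Z -> 0 < l1 -> 0 < l2 -> l2 <= l1 ->
  (exists p, homothet l1 x1 Z p /\ homothet l2 x2 Z p) ->
  exists v, vertex (homothet l2 x2 Z) v /\ homothet l1 x1 Z v.
Proof.
move=> [[s hull] Z_faces_sym] _ l2_gt0 l21 meet.
have Z_hull x : Z x <-> nncomb s x 1 by rewrite hull; exact: nncomb_weights.
have [c0 Z_sym] := Z_faces_sym Z (or_introl (fun x => conj id id)).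
have [v vtx_v Z1_v] := homothets_meet_image (hull_convex Z_hull) Z_sym
  (exists_vertex_reflect Z_hull Z_faces_sym) l2_gt0 l21 meet.
by exists (l2 *: v + x2); split=> //; exact: vertex_homothet.
Qed.
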